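(* Let $q$ be a prime power, $b,k,t$ positive integers with $b\le k$, and let $wt_b:\mathbb{F}_q^k\to\{0,b,b+1,\ldots,k\}$ be the $b$-symbol weight function. Let $g_1=0$ and $g_i=b+i-2$ for $2\le i\le k-b+2$. Then \[ r_b^{wt_b}(k,t)\le N_b\big(\boldsymbol{B}^{(2)}_{wt_b}(t,g_1,\ldots,g_{k-b+2})\big), \] where $\boldsymbol{B}^{(2)}_{wt_b}(t,g_1,\ldots,g_{k-b+2})$ is the $(k-b+2)\times(k-b+2)$ matrix with entries \[ [\boldsymbol{B}^{(2)}_{wt_b}]_{ij}=\begin{cases}0,& i=j,\\ 2t-\max\{i,j\}+2,& i\ne j\text{ and } (i=1\text{ or } j=1),\\ 2t,& i,j>1\text{ and } 0<|i-j|<b,\\ [2t+b-|i-j|]^+,& i,j>1\text{ and } |i-j|\ge b.\end{cases} \]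
   Context: For $\boldsymbol{z}=(z_0,\ldots,z_{n-1}),\boldsymbol{w}\in\mathbb{F}_q^n$, $d_b(\boldsymbol{z},\boldsymbol{w})$ is the number of $i\in\{0,\ldots,n-1\}$ with $(z_i,\ldots,z_{i+b-1})\ne(w_i,\ldots,w_{i+b-1})$ (indices mod $n$), and $wt_b(\boldsymbol{x})=d_b(\boldsymbol{x},\boldsymbol{0})$. $[x]^+=\max\{x,0\}$. A systematic encoding $\mathrm{Enc}(\boldsymbol{x})=(\boldsymbol{x},p(\boldsymbol{x}))\in\mathbb{F}_q^{k+r}$ is a function-correcting $b$-symbol code for $f$ if $d_b(\mathrm{Enc}(\boldsymbol{x}_1),\mathrm{Enc}(\boldsymbol{x}_2))\ge 2t+1$ whenever $f(\boldsymbol{x}_1)\ne f(\boldsymbol{x}_2)$; $r_b^f(k,t)$ is the smallest $r$ for which one exists. For an $M\times M$ nonnegative integer matrix $\boldsymbol{B}$, $N_b(\boldsymbol{B})$ is the smallest $r$ such that there exist $\boldsymbol{p}_1,\ldots,\boldsymbol{p}_M\in\mathbb{F}_q^r$ (in some ordering) with $d_b(\boldsymbol{p}_i,\boldsymbol{p}_j)\ge[\boldsymbol{B}]_{ij}$ for all $i,j$. *)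

From mathcomp Require Import ssreflect ssrfun ssrbool eqtype ssrnat seq div fintype tuple ssralg finalg.
Set Implicit Arguments. Unset Strict Implicit. Unset Printing Implicit Defensive.
Import GRing.Theory.

Definition dsym (F : finFieldType) (b : nat) (z w : seq F) : nat :=
  let n := size z in
  count (fun i => has (fun j => nth 0%R z ((i + j) %% n) != nth 0%R w ((i + j) %% n))
                      (iota 0 b))
        (iota 0 n).

Definition wtsym (F : finFieldType) (b : nat) (x : seq F) : nat :=
  dsym b x (nseq (size x) 0%R).

Definition is_FCbSC (F : finFieldType) (b k t r : nat) (R : Type)
    (f : k.-tuple F -> R) (p : k.-tuple F -> r.-tuple F) : Prop :=
  forall x1 x2 : k.-tuple F, f x1 <> f x2 ->
    (2 * t + 1 <= dsym b (val x1 ++ val (p x1)) (val x2 ++ val (p x2)))%N.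

(* r is feasible for the definition of r_b^f(k,t). *)
Definition FCbSC_feasible (F : finFieldType) (b k t r : nat) (R : Type)
    (f : k.-tuple F -> R) : Prop :=
  exists p : k.-tuple F -> r.-tuple F, is_FCbSC b t f p.

(* r is feasible for the definition of N_b(B) for an M x M nat matrix B. *)
Definition Nb_feasible (F : finFieldType) (b M r : nat) (B : 'I_M -> 'I_M -> nat) : Prop :=
  exists P : 'I_M -> r.-tuple F,
    forall i j : 'I_M, (B i j <= dsym b (val (P i)) (val (P j)))%N.

(* The matrix B^(2)_{wt_b}(t, g_1, ..., g_{k-b+2}), 1-indexed entries
   i = i0+1, j = j0+1 for i0, j0 : 'I_(k-b+2). *)
Definition absdiff (i j : nat) : nat := (i - j) + (j - i).

Definition B2wt (k b t : nat) (i0 j0 : 'I_(k - b + 2)) : nat :=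
  let i := (val i0).+1 in
  let j := (val j0).+1 in
  if i == j then 0
  else if (i == 1) || (j == 1) then (2 * t + 2) - maxn i j
  else if absdiff i j < b then 2 * t
  else (2 * t + b) - absdiff i j.

From mathcomp Require Import ssreflect ssrfun ssrbool eqtype ssrnat seq div fintype tuple ssralg finalg.
From mathcomp Require Import zify.

(* Encode x by the parity word P_(row (wt_b x)) of an N_b-feasible family,
   where (1-indexed) row 0 = 1 and row w = w - b + 2.  If wt_b x1 <> wt_b x2,
   then x1 <> x2, so d_b(x1, x2) >= max(b, |wt_b x1 - wt_b x2|): a differing
   symbol lies in b windows, and d_b satisfies the triangle inequality.  The
   parity words add at least the entry B_(row, row'), and appending them loses
   at most b - 1 differing windows, all of them wrapping around.  The entries
   of B^(2) are exactly such that max(b, |w - w'|) + B_(row w, row w') >= 2t + b. *)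

Set Implicit Arguments. Unset Strict Implicit. Unset Printing Implicit Defensive.

Lemma sub_in_count (T : eqType) (P Q : pred T) (s : seq T) :
  {in s, forall x, P x -> Q x} -> count P s <= count Q s.
Proof.
elim: s => //= x s IHs PQ.
apply: leq_add; last by apply: IHs => y sy; apply: PQ; rewrite inE sy orbT.
by case Px: (P x) => //=; rewrite PQ ?mem_head.
Qed.

Lemma count_predU_le (T : Type) (P Q : pred T) (s : seq T) :
  count (predU P Q) s <= count P s + count Q s.
Proof. by rewrite -count_predUI leq_addr. Qed.

Lemma count_iota_itv lo hi m n :
  count (fun i => lo <= i < hi) (iota m n) = minn hi (m + n) - maxn lo m.
Proof.
elim: n m => [|n IHn] m /=; first lia.
by rewrite IHn; case: (leqP lo m); case: (ltnP m hi) => /=; lia.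
Qed.

Section SymbolWindows.

Variables (F : finFieldType) (b : nat).
Implicit Types x y z w u v : seq F.

Definition window_neq n z w i : bool :=
  has (fun j => nth 0%R z ((i + j) %% n) != nth 0%R w ((i + j) %% n)) (iota 0 b).

Lemma dsymE z w : dsym b z w = count (window_neq (size z) z w) (iota 0 (size z)).
Proof. by []. Qed.

Lemma dsym_refl x : dsym b x x = 0.
Proof.
rewrite dsymE (eq_count (a2 := pred0)) ?count_pred0 // => i.
by apply/hasPn => j _; rewrite eqxx.
Qed.

Lemma dsym_sym x y : size y = size x -> dsym b x y = dsym b y x.
Proof.
move=> sy; rewrite !dsymE sy; apply: eq_count => i.
by apply: eq_has => j; rewrite eq_sym.
Qed.

Lemma dsym_le_add z w u v x y : size u = size z -> size x = size z ->
  (forall m, nth 0%R z m != nth 0%R w m ->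
     (nth 0%R u m != nth 0%R v m) || (nth 0%R x m != nth 0%R y m)) ->
  dsym b z w <= dsym b u v + dsym b x y.
Proof.
move=> su sx zw_uv_xy; rewrite !dsymE su sx.
apply: leq_trans (count_predU_le _ _ _); apply: sub_count => i /hasP [j ij neq_j].
by case/orP: (zw_uv_xy _ neq_j) => neq; apply/orP; [left | right]; apply/hasP; exists j.
Qed.

Lemma dsym_triangle x y z : size y = size x -> dsym b x z <= dsym b x y + dsym b y z.
Proof.
move=> sy; apply: dsym_le_add => // m.
by case: (eqVneq (nth 0%R x m) (nth 0%R y m)) => [-> ->|].
Qed.

Lemma first_nth_neq x y : size y = size x -> x != y ->
  exists2 a, (a < size x) && (nth 0%R x a != nth 0%R y a) &
    forall m, m < size x -> nth 0%R x m != nth 0%R y m -> a <= m.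
Proof.
move=> sy xy.
have : has (fun m => nth 0%R x m != nth 0%R y m) (iota 0 (size x)).
  apply: contraR xy => /hasPn same; apply/eqP/(eq_from_nth (x0 := 0%R)) => // m mx.
  by apply/eqP; rewrite -[_ == _]negbK same // mem_iota.
case/hasP => m; rewrite mem_iota add0n => /andP [_ mx] neq_m.
have ex_neq : exists m, (m < size x) && (nth 0%R x m != nth 0%R y m).
  by exists m; rewrite mx.
case: (ex_minnP ex_neq) => a a_neq a_min; exists a => // l lx neq_l.
by apply: a_min; rewrite lx.
Qed.

Lemma dsym_neq_ge x y : size y = size x -> b <= size x -> x != y -> b <= dsym b x y.
Proof.
move=> sy bk xy; have [a /andP [ax neq_a] _] := first_nth_neq sy xy.
set k := size x in ax bk *; rewrite dsymE -/k.
pose before := fun i => a + 1 - b <= i < a + 1.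
pose wrapped := fun i => k + a + 1 - b <= i < k.
have hit_a : {in iota 0 k, forall i, predU before wrapped i -> window_neq k x y i}.
  move=> i; rewrite mem_iota => ik /orP [/andP [lo hi] | /andP [lo hi]]; apply/hasP.
  - exists (a - i); first by rewrite mem_iota; lia.
    by rewrite subnKC 1?modn_small; lia.
  - exists (k + a - i); first by rewrite mem_iota; lia.
    by rewrite subnKC ?modnDl ?modn_small //; lia.
have disjoint : count (predI before wrapped) (iota 0 k) = 0.
  rewrite (eq_count (a2 := pred0)) ?count_pred0 // => i.
  by apply/negbTE/andP; rewrite /before /wrapped; lia.
have covering : count (predU before wrapped) (iota 0 k) = b.
  have := count_predUI before wrapped (iota 0 k).
  by rewrite disjoint addn0 /before /wrapped !count_iota_itv => ->; lia.
by rewrite -covering; apply: sub_in_count.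
Qed.

(* A window of [x1, x2]
   that differs only after wrapping around must reach [a], so it starts in the
   last [b - 1 - a] positions; a window of [p1, p2] that wraps around sees [a]
   in the concatenation unless it is one of at most [a] windows ending short of
   it.  Hence concatenation loses at most [b - 1] differing windows. *)
Section Concatenation.

Variables x1 x2 p1 p2 : seq F.
Let k := size x1.
Let r := size p1.
Let cat_neq := window_neq (k + r) (x1 ++ p1) (x2 ++ p2).
Variable a : nat.
Hypotheses (x2_size : size x2 = k) (b_le_k : b <= k) (a_lt_k : a < k).
Hypothesis neq_a : nth 0%R x1 a != nth 0%R x2 a.
Hypothesis a_first : forall m, m < k -> nth 0%R x1 m != nth 0%R x2 m -> a <= m.

Lemma window_neq_prefix i : i < k -> window_neq k x1 x2 i ->
  cat_neq i || (k - b + 1 + a <= i < k).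
Proof.
move=> ik /hasP [j]; rewrite mem_iota => /andP [_ jb] neq_j.
have [ijk | kij] := ltnP (i + j) k.
  apply/orP; left; apply/hasP; exists j; first by rewrite mem_iota.
  rewrite modn_small // in neq_j.
  by rewrite modn_small ?nth_cat ?x2_size ?ijk //; lia.
apply/orP; right.
have wrap : (i + j) %% k = i + j - k by rewrite -{1}(subnK kij) modnDr modn_small; lia.
rewrite wrap in neq_j; have := a_first _ neq_j; lia.
Qed.

Lemma window_neq_suffix i : i < r -> window_neq r p1 p2 i ->
  cat_neq (k + i) || (r + 1 - b <= i < r + a + 1 - b).
Proof.
move=> ir /hasP [j]; rewrite mem_iota => /andP [_ jb] neq_j.
have [ijr | rij] := ltnP (i + j) r.
  apply/orP; left; apply/hasP; exists j; first by rewrite mem_iota.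
  rewrite modn_small // in neq_j.
  rewrite -addnA modn_small ?nth_cat ?x2_size ?ltnNge ?leq_addr /= ?addKn //; lia.
have [reach_a | short] := ltnP (r + a) (i + b).
  apply/orP; left; apply/hasP; exists (r + a - i); first by rewrite mem_iota; lia.
  rewrite -addnA subnKC; last lia.
  by rewrite addnA modnDl modn_small ?nth_cat ?x2_size ?a_lt_k //; lia.
by apply/orP; right; lia.
Qed.

End Concatenation.

Lemma dsym_cat x1 x2 p1 p2 :
  size x2 = size x1 -> b <= size x1 -> x1 != x2 ->
  dsym b x1 x2 + dsym b p1 p2 <= dsym b (x1 ++ p1) (x2 ++ p2) + b.-1.
Proof.
move=> sx bk x12; have [a /andP [ax neq_a] a_first] := first_nth_neq sx x12.
rewrite !dsymE size_cat iotaD add0n count_cat.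
set k := size x1 in sx bk ax a_first *; set r := size p1.
set cat_neq := window_neq (k + r) _ _.
have prefix_loss :
    count (window_neq k x1 x2) (iota 0 k) <= count cat_neq (iota 0 k) + (b.-1 - a).
  apply: leq_trans (sub_in_count (Q := predU cat_neq (fun i => k - b + 1 + a <= i < k)) _) _.
    by move=> i; rewrite mem_iota => /andP [_ ik]; apply: window_neq_prefix.
  by apply: leq_trans (count_predU_le _ _ _) _; rewrite count_iota_itv leq_add2l; lia.
have suffix_loss :
    count (window_neq r p1 p2) (iota 0 r) <= count cat_neq (iota k r) + minn a b.-1.
  have -> : iota k r = map (addn k) (iota 0 r) by rewrite -iotaDl addn0.
  rewrite count_map.
  apply: leq_trans (sub_in_count
    (Q := predU (cat_neq \o addn k) (fun i => r + 1 - b <= i < r + a + 1 - b)) _) _.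
    by move=> i; rewrite mem_iota => /andP [_ ir]; apply: window_neq_suffix.
  by apply: leq_trans (count_predU_le _ _ _) _; rewrite count_iota_itv leq_add2l; lia.
lia.
Qed.

Lemma wtsym_le_size x : wtsym b x <= size x.
Proof. by rewrite /wtsym dsymE (leq_trans (count_size _ _)) ?size_iota. Qed.

Lemma wtsym_eq0_or_ge x : b <= size x -> wtsym b x = 0 \/ b <= wtsym b x.
Proof.
move=> bx; have [x0 | nx0] := eqVneq x (nseq (size x) 0%R).
  by left; rewrite /wtsym -x0 dsym_refl.
by right; apply: dsym_neq_ge; rewrite ?size_nseq.
Qed.

Lemma absdiff_wtsym_le x y :
  size y = size x -> absdiff (wtsym b x) (wtsym b y) <= dsym b x y.
Proof.
move=> sy.
have wx : wtsym b x <= dsym b x y + wtsym b y by rewrite /wtsym sy; apply: dsym_triangle.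
have wy : wtsym b y <= dsym b x y + wtsym b x.
  by rewrite /wtsym (dsym_sym sy) -sy; apply: dsym_triangle.
by rewrite /absdiff; lia.
Qed.

End SymbolWindows.

Definition weight_row (b w : nat) : nat := if w == 0 then 0 else w - b + 1.

Lemma weight_row_lt k b w : w <= k -> weight_row b w < k - b + 2.
Proof. by rewrite /weight_row; case: eqP; lia. Qed.

Lemma B2wt_weight_row k b t (i j : 'I_(k - b + 2)) (w1 w2 : nat) :
  w1 != w2 -> (w1 = 0 \/ b <= w1) -> (w2 = 0 \/ b <= w2) ->
  val i = weight_row b w1 -> val j = weight_row b w2 ->
  2 * t + b <= @B2wt k b t i j + maxn b (absdiff w1 w2).
Proof.
move=> + + + ei ej; rewrite /B2wt ei ej /weight_row /absdiff.
by case: (eqVneq w1 0) => [-> | ?]; case: (eqVneq w2 0) => [-> | ?]; do ![case: ifP => ?]; lia.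
Qed.

Theorem lemma6p1 (F : finFieldType) (b k t : nat) :
  (0 < b)%N -> (b <= k)%N -> (0 < t)%N ->
  forall r : nat, @Nb_feasible F b (k - b + 2) r (@B2wt k b t) ->
  exists2 r' : nat, (r' <= r)%N &
    @FCbSC_feasible F b k t r' nat (fun x : k.-tuple F => @wtsym F b (val x)).
Proof.
move=> b_gt0 b_le_k _ r [P P_dist]; exists r => //.
have row_lt (x : k.-tuple F) : weight_row b (wtsym b x) < k - b + 2.
  by apply: weight_row_lt; rewrite -{2}(size_tuple x) wtsym_le_size.
pose row x := Ordinal (row_lt x).
exists (fun x => P (row x)) => x1 x2 /eqP wt12.
have sx : size (val x2) = size (val x1) by rewrite !size_tuple.
have bk1 : b <= size (val x1) by rewrite size_tuple.
have bk2 : b <= size (val x2) by rewrite size_tuple.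
have x12 : val x1 != val x2 by apply: contraNneq wt12 => ->.
have data_dist :
    maxn b (absdiff (wtsym b (val x1)) (wtsym b (val x2))) <= dsym b (val x1) (val x2).
  by rewrite geq_max dsym_neq_ge ?absdiff_wtsym_le.
have entry := @B2wt_weight_row k b t (row x1) (row x2) _ _ wt12
  (wtsym_eq0_or_ge bk1) (wtsym_eq0_or_ge bk2) erefl erefl.
have parity_dist := P_dist (row x1) (row x2).
have := dsym_cat (val (P (row x1))) (val (P (row x2))) sx bk1 x12.
lia.
Qed.
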